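(* Let $\|\cdot\|$ be a monotone norm on $\mathbb{R}^K$, let $T \ge 1$, and let $\boldsymbol{\alpha}_1,\dots,\boldsymbol{\alpha}_T \in \Delta(K)$ and $\mathbf{l}_1,\dots,\mathbf{l}_T \in [0,1]^K$. Let $\bar{\mathbf{r}}_T = \frac{1}{T}\sum_{t=1}^T (\boldsymbol{\alpha}_t\odot\mathbf{l}_t, \mathbf{l}_t) \in \mathbb{R}^K\times\mathbb{R}^K$ and suppose $\min_{\mathbf{s} \in S}\|\bar{\mathbf{r}}_T - \mathbf{s}\|^+ \le \gamma$. Then \[ \Big\|\sum_{t=1}^T \boldsymbol{\alpha}_t\odot\mathbf{l}_t\Big\| - C^*\Big(\sum_{t=1}^T \mathbf{l}_t\Big) \le T\gamma. \] Consequently, any algorithm for the repeated game $P$ achieving convergence rate $\gamma(T)$, applied to online load balancing, has $\mathrm{Regret}(T) \le T\gamma(T)$.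
   Context: $\Delta(K) = \{\boldsymbol{\alpha} \in [0,1]^K : \sum_i \alpha_i = 1\}$; $\boldsymbol{\alpha}\odot\mathbf{l} = (\alpha_1 l_1,\dots,\alpha_K l_K)$; $C^*(\mathbf{l}) = \min_{\boldsymbol{\alpha}\in\Delta(K)}\|\boldsymbol{\alpha}\odot\mathbf{l}\|$. A norm is monotone if $\|\mathbf{x}\|\le\|\mathbf{y}\|$ whenever $|x_i|\le|y_i|$ for all $i$. $S = \{(\mathbf{x},\mathbf{y}) \in [0,1]^K\times[0,1]^K : \|\mathbf{x}\| \le C^*(\mathbf{y})\}$ and $\|(\mathbf{x},\mathbf{y})\|^+ = \|\mathbf{x}\|+\|\mathbf{y}\|$. Online load balancing: in each round $t=1,\dots,T$ the learner picks $\boldsymbol{\alpha}_t\in\Delta(K)$, then an adversary reveals $\mathbf{l}_t \in [0,1]^K$; $\mathrm{Regret}(T) = \|\sum_t \boldsymbol{\alpha}_t\odot\mathbf{l}_t\| - C^*(\sum_t \mathbf{l}_t)$. The repeated game $P$ has learner actions $\Delta(K)$, adversary actions $[0,1]^K$, vector payoff $r(\boldsymbol{\alpha},\mathbf{l}) = (\boldsymbol{\alpha}\odot\mathbf{l},\mathbf{l})$, target set $S$, and metric $\mathrm{dist}(\mathbf{r},\mathbf{s}) = \|\mathbf{r}-\mathbf{s}\|^+$; an algorithm has convergence rate $\gamma(T)$ if against every adversary $\min_{\mathbf{s}\in S}\mathrm{dist}(\bar{\mathbf{r}}_T,\mathbf{s}) \le \gamma(T)$, where $\bar{\mathbf{r}}_T$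 is the average payoff. *)

From mathcomp Require Import all_boot all_order all_algebra.
From mathcomp Require Import all_classical all_reals.
Set Implicit Arguments. Unset Strict Implicit. Unset Printing Implicit Defensive.
Import Order.TTheory GRing.Theory Num.Theory.
Local Open Scope ring_scope.
Local Open Scope classical_set_scope.

Section Defs.
Variables (R : realType) (K : nat).

Definition vec := 'I_K -> R.

Definition is_norm (N : vec -> R) : Prop :=
  [/\ forall x, N x = 0 -> x = (fun _ => 0),
      forall (a : R) x, N (fun i => a * x i) = `|a| * N x
    & forall x y, N (fun i => x i + y i) <= N x + N y].

Definition monotone_norm (N : vec -> R) : Prop :=
  is_norm N /\ forall x y, (forall i, `|x i| <= `|y i|) -> N x <= N y.

Definition simplex (a : vec) : Prop :=
  (forall i, 0 <= a i <= 1) /\ \sum_(i < K) a i = 1.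

Definition unit_box (l : vec) : Prop := forall i, 0 <= l i <= 1.

Definition hadamard (a l : vec) : vec := fun i => a i * l i.

(* C*(l) = min_{alpha in Delta(K)} ||alpha ⊙ l||, written as the infimum
   (the minimum is attained, so they coincide) *)
Definition Cstar (N : vec -> R) (l : vec) : R :=
  inf [set N (hadamard a l) | a in simplex].

Definition targetS (N : vec -> R) : set (vec * vec) :=
  [set xy | unit_box xy.1 /\ unit_box xy.2 /\ N xy.1 <= Cstar N xy.2].

Definition normplus (N : vec -> R) (r : vec * vec) : R := N r.1 + N r.2.

(* min_{s in S} ||r - s||^+ (as infimum; attained since S is compact) *)
Definition dist_to_S (N : vec -> R) (r : vec * vec) : R :=
  inf [set normplus N ((fun i => r.1 i - s.1 i), (fun i => r.2 i - s.2 i))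
      | s in targetS N].

(* average payoff (1/T) sum_{t<T} (alpha_t ⊙ l_t, l_t); rounds indexed 0..T-1 *)
Definition avg_payoff (T : nat) (a l : nat -> vec) : vec * vec :=
  ((fun i => T%:R^-1 * \sum_(t < T) a t i * l t i),
   (fun i => T%:R^-1 * \sum_(t < T) l t i)).

Definition regret (N : vec -> R) (T : nat) (a l : nat -> vec) : R :=
  N (fun i => \sum_(t < T) a t i * l t i) - Cstar N (fun i => \sum_(t < T) l t i).

(* A (deterministic) learner algorithm maps the history of past loss vectors
   to an action; it must always output a point of Delta(K). *)
Definition algorithm := seq vec -> vec.
Definition valid_algorithm (A : algorithm) : Prop := forall h, simplex (A h).

(* Actions played by A against the loss sequence l : round t (0-based) uses
   the history l_0, ..., l_{t-1}. *)
Definition plays (A : algorithm) (l : nat -> vec) : nat -> vec :=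
  fun t => A (mkseq l t).

(* convergence rate gamma(T): against every adversary (for a deterministic
   learner, every loss sequence in [0,1]^K), dist(rbar_T, S) <= gamma(T). *)
Definition has_rate (N : vec -> R) (A : algorithm) (gamma : nat -> R) : Prop :=
  forall T : nat, (1 <= T)%N -> forall l : nat -> vec,
    (forall t, (t < T)%N -> unit_box (l t)) ->
    dist_to_S N (avg_payoff T (plays A l) l) <= gamma T.

End Defs.

From mathcomp Require Import all_boot all_order all_algebra.
From mathcomp Require Import all_classical all_reals.
Set Implicit Arguments. Unset Strict Implicit. Unset Printing Implicit Defensive.
Import Order.TTheory GRing.Theory Num.Theory.
Local Open Scope ring_scope.
Local Open Scope classical_set_scope.

(* For a point (x, y) of R^K x R^K write gap(x, y) = ||x|| - C*(y).  Two
   properties of C* carry the argument, both valid for any monotone norm as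
   soon as Delta(K) is nonempty:
   - C* is 1-Lipschitz: C*(y) <= C*(x) + ||y - x||, because ||alpha (.) v||
     <= ||v|| for alpha in Delta(K);
   - C* is positively homogeneous: C*(c y) = c C*(y) for c > 0.
   For s = (s1, s2) in S we get ||x|| <= ||x - s1|| + ||s1|| and
   ||s1|| <= C*(s2) <= C*(y) + ||y - s2||, hence gap(x, y) <= ||(x,y) - s||^+;
   taking the infimum over S gives gap(x, y) <= dist((x, y), S).
   Finally, the cumulative vectors are T times the average payoff rbar_T, so by
   homogeneity Regret(T) = T gap(rbar_T) <= T dist(rbar_T, S) <= T gamma. *)

Section MonotoneNorm.
Variables (R : realType) (K : nat) (N : vec R K -> R).
Hypothesis hN : monotone_norm N.

Lemma norm_zero : N (fun _ => 0) = 0.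
Proof.
case: hN => -[_ hZ _] _.
by have := hZ 0 (fun _ => 0); rewrite normr0 !mul0r.
Qed.

Lemma norm_ge0 (x : vec R K) : 0 <= N x.
Proof. by case: hN => _ hmono; rewrite -norm_zero; apply: hmono => i; rewrite normr0. Qed.

Lemma normZ_ge0 (c : R) (x : vec R K) : 0 <= c -> N (fun i => c * x i) = c * N x.
Proof. by case: hN => -[_ hZ _] _ c_ge0; rewrite hZ ger0_norm. Qed.

Lemma norm_le_subD (x y : vec R K) : N x <= N (fun i => x i - y i) + N y.
Proof.
case: hN => -[_ _ htri] hmono; apply: le_trans (htri _ _).
by apply: hmono => i; rewrite subrK.
Qed.

Lemma norm_subC (x y : vec R K) : N (fun i => x i - y i) = N (fun i => y i - x i).
Proof. by case: hN => _ hmono; apply/eqP; rewrite eq_le !hmono // => i; rewrite distrC. Qed.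

Lemma norm_hadamard_le (a x : vec R K) : simplex a -> N (hadamard a x) <= N x.
Proof.
case: hN => _ hmono [a01 _]; apply: hmono => i; rewrite /hadamard normrM.
by have /andP[a0 a1] := a01 i; rewrite ger0_norm // ler_piMl.
Qed.

(* The set whose infimum defines C* is bounded below by 0, so C* is a
   genuine lower bound of it. *)
Lemma Cstar_has_lbound (y : vec R K) :
  has_lbound [set N (hadamard a y) | a in @simplex R K].
Proof. by exists 0 => z [a _ <-]; apply: norm_ge0. Qed.

Lemma Cstar_le (a y : vec R K) : simplex a -> Cstar N y <= N (hadamard a y).
Proof. by move=> sa; apply: ge_inf; [apply: Cstar_has_lbound | exists a]. Qed.

Hypothesis simplex_inhabited : exists a : vec R K, simplex a.

Lemma Cstar_ge (m : R) (y : vec R K) :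
  (forall a, simplex a -> m <= N (hadamard a y)) -> m <= Cstar N y.
Proof.
move=> hm; apply: lb_le_inf; last by move=> z [a sa <-]; apply: hm.
by case: simplex_inhabited => a sa; exists (N (hadamard a y)), a.
Qed.

Lemma Cstar_lipschitz (x y : vec R K) :
  Cstar N y <= Cstar N x + N (fun i => y i - x i).
Proof.
rewrite -lerBlDr; apply: Cstar_ge => a sa; rewrite lerBlDr.
apply: le_trans (@Cstar_le a y sa) _.
apply: le_trans (norm_le_subD (hadamard a y) (hadamard a x)) _.
rewrite addrC lerD2l.
have -> : (fun i => hadamard a y i - hadamard a x i) = hadamard a (fun i => y i - x i).
  by apply: funext => i; rewrite /hadamard mulrBr.
exact: norm_hadamard_le.
Qed.

(* Half of homogeneity; the other half follows by scaling with c^-1. *)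
Lemma Cstar_scale_ge (c : R) (y : vec R K) :
  0 <= c -> c * Cstar N y <= Cstar N (fun i => c * y i).
Proof.
move=> c_ge0; apply: Cstar_ge => a sa.
have -> : hadamard a (fun i => c * y i) = (fun i => c * hadamard a y i).
  by apply: funext => i; rewrite /hadamard mulrCA.
by rewrite normZ_ge0 // ler_wpM2l // Cstar_le.
Qed.

Lemma Cstar_scale (c : R) (y : vec R K) :
  0 < c -> Cstar N (fun i => c * y i) = c * Cstar N y.
Proof.
move=> c_gt0; apply/eqP; rewrite eq_le; apply/andP; split; last first.
  exact: Cstar_scale_ge (ltW c_gt0).
rewrite -ler_pdivrMl //.
have cV_ge0 : 0 <= c^-1 by rewrite invr_ge0 ltW.
apply: le_trans (@Cstar_scale_ge c^-1 (fun i => c * y i) cV_ge0) _.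
have -> : (fun i => c^-1 * (c * y i)) = y.
  by apply: funext => i; rewrite mulrA mulVf ?mul1r ?gt_eqF.
exact: lexx.
Qed.

Lemma gap_le_normplus (x y : vec R K) (s : vec R K * vec R K) :
  targetS N s ->
  N x - Cstar N y <= normplus N ((fun i => x i - s.1 i), (fun i => y i - s.2 i)).
Proof.
case=> _ [_ s1_le]; rewrite /normplus /= lerBlDr.
apply: le_trans (norm_le_subD x s.1) _; rewrite -addrA lerD2l addrC.
apply: le_trans s1_le _; rewrite norm_subC; exact: Cstar_lipschitz.
Qed.

(* Hence the gap at a point is bounded by its distance to S; the infimum
   ranges over a nonempty set since (0, 0) lies in S. *)
Lemma gap_le_dist (r : vec R K * vec R K) :
  N r.1 - Cstar N r.2 <= dist_to_S N r.
Proof.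
apply: lb_le_inf; last by move=> z [s sS <-]; apply: gap_le_normplus.
have zeroS : targetS N ((fun _ => 0), (fun _ => 0)).
  split; first by move=> i; rewrite lexx ler01.
  split; first by move=> i; rewrite lexx ler01.
  by rewrite /= norm_zero; apply: Cstar_ge => a _; apply: norm_ge0.
by eexists; exists ((fun _ => 0), (fun _ => 0)).
Qed.

Lemma scale_average (T : nat) (x : vec R K) :
  (1 <= T)%N -> x = (fun i => T%:R * (T%:R^-1 * x i)).
Proof.
move=> T_ge1; apply: funext => i.
by rewrite mulrA mulfV ?mul1r // pnatr_eq0 -lt0n.
Qed.

Lemma cumulative_gap (T : nat) (a l : nat -> vec R K) :
  (1 <= T)%N ->
  N (fun i => \sum_(t < T) a t i * l t i) - Cstar N (fun i => \sum_(t < T) l t i)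
  = T%:R * (N (avg_payoff T a l).1 - Cstar N (avg_payoff T a l).2).
Proof.
move=> T_ge1; have T_gt0 : 0 < T%:R :> R by rewrite ltr0n.
have -> : (fun i => \sum_(t < T) a t i * l t i) =
          (fun i => T%:R * (avg_payoff T a l).1 i) by exact: scale_average.
have -> : (fun i => \sum_(t < T) l t i) =
          (fun i => T%:R * (avg_payoff T a l).2 i) by exact: scale_average.
by rewrite normZ_ge0 ?ler0n // Cstar_scale // mulrBr.
Qed.

(* Regret after T rounds is at most T times the distance of rbar_T to S; this
   holds for arbitrary action and loss vectors, given only that Delta(K) is
   nonempty. *)
Lemma regret_le_T_dist (T : nat) (a l : nat -> vec R K) :
  (1 <= T)%N ->
  N (fun i => \sum_(t < T) a t i * l t i) - Cstar N (fun i => \sum_(t < T) l t i)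
  <= T%:R * dist_to_S N (avg_payoff T a l).
Proof.
move=> T_ge1; rewrite cumulative_gap // ler_wpM2l ?ler0n //.
exact: gap_le_dist.
Qed.

End MonotoneNorm.

Theorem proposition2 (R : realType) (K : nat) (N : vec R K -> R) :
  monotone_norm N ->
  (forall (T : nat) (a l : nat -> vec R K) (gamma : R),
     (1 <= T)%N ->
     (forall t, (t < T)%N -> simplex (a t)) ->
     (forall t, (t < T)%N -> unit_box (l t)) ->
     dist_to_S N (avg_payoff T a l) <= gamma ->
     N (fun i => \sum_(t < T) a t i * l t i)
       - Cstar N (fun i => \sum_(t < T) l t i) <= T%:R * gamma)
  /\
  (forall (A : algorithm R K) (gamma : nat -> R),
     valid_algorithm A -> has_rate N A gamma ->
     forall (T : nat) (l : nat -> vec R K), (1 <= T)%N ->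
     (forall t, (t < T)%N -> unit_box (l t)) ->
     regret N T (plays A l) l <= T%:R * gamma T).
Proof.
move=> hN.
have regret_bound (T : nat) (a l : nat -> vec R K) (gamma : R) :
    (1 <= T)%N -> simplex (a 0%N) -> dist_to_S N (avg_payoff T a l) <= gamma ->
    N (fun i => \sum_(t < T) a t i * l t i)
      - Cstar N (fun i => \sum_(t < T) l t i) <= T%:R * gamma.
  move=> T_ge1 a0_simplex dist_le.
  have inhabited : exists a0 : vec R K, simplex a0 by exists (a 0%N).
  apply: le_trans (regret_le_T_dist hN inhabited a l T_ge1) _.
  by rewrite ler_wpM2l ?ler0n.
split=> [T a l gamma T_ge1 a_simplex _ | A gamma A_valid A_rate T l T_ge1 l_box].
  exact: regret_bound (a_simplex 0%N T_ge1).
exact: regret_bound T_ge1 (A_valid _) (A_rate T T_ge1 l l_box).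
Qed.
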